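(* Let $P(\lambda)=\sum_{j=0}^m A_j\lambda^j$ be an $n\times n$ complex matrix polynomial with $\det A_m\neq0$, let $\mu_1\neq\mu_2$ be complex numbers, let $w=\{\omega_0,\dots,\omega_m\}$ be nonnegative weights with $\omega_0>0$, and suppose that the function $\gamma\mapsto s_{2n-1}(F[P(\mu_1,\mu_2);\gamma])$, $\gamma\ge0$ real, attains its maximum at $\gamma_*=0$. For $i=1,2$ let $u_i,v_i\in\mathbb{C}^n$ be a pair of unit left and right singular vectors of $P(\mu_i)$ corresponding to $\sigma_i=s_n(P(\mu_i))$, i.e. $P(\mu_i)v_i=\sigma_iu_i$, and suppose $v_1,v_2$ are linearly independent. Define $$\Delta_0=-[u_1\ u_2]\begin{bmatrix}\sigma_1&0\\0&\sigma_2\end{bmatrix}[v_1\ v_2]^{\dagger},\qquad Q_0(\lambda)=A_m\lambda^m+\dots+A_1\lambda+(A_0+\Delta_0),$$ where $[v_1\ v_2]^\dagger$ is the Moore–Penrose pseudoinverse. Then $Q_0$ lies on the boundary of $\mathcal{B}(P,\|\Delta_0\|/\omega_0,w)$, and $\mu_1,\mu_2$ are eigenvalues of $Q_0$ with eigenvectors $v_1,v_2$ respectively.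
   Context: $\|\cdot\|$ is the spectral norm. For $\varepsilon\ge0$, $\mathcal{B}(P,\varepsilon,w)$ is the set of matrix polynomials $\sum_{j=0}^m(A_j+\Delta_j)\lambda^j$ with $\Delta_j\in\mathbb{C}^{n\times n}$ and $\|\Delta_j\|\le\varepsilon\omega_j$ for all $j$; its boundary consists of those members for which $\|\Delta_j\|=\varepsilon\omega_j$ for some $j$. $P[\mu_1,\mu_2]=\frac{P(\mu_1)-P(\mu_2)}{\mu_1-\mu_2}$, $F[P(\mu_1,\mu_2);\gamma]=\begin{bmatrix} P(\mu_1) & 0\\ \gamma P[\mu_1,\mu_2] & P(\mu_2)\end{bmatrix}$. Singular values are ordered decreasingly, so $s_n(M)$ is the smallest singular value of an $n\times n$ matrix $M$ and $s_{2n-1}$ the second smallest of a $2n\times2n$ matrix. *)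

From mathcomp Require Import all_boot all_order all_algebra complex.
From mathcomp Require Import reals classical_sets.
Set Implicit Arguments. Unset Strict Implicit. Unset Printing Implicit Defensive.
Import Order.TTheory GRing.Theory Num.Theory.
Local Open Scope ring_scope.

Section Defs.
Variable R : realType.
Local Notation C := (R[i]).

Definition ctmx (p q : nat) (M : 'M[C]_(p, q)) : 'M[C]_(q, p) :=
  (map_mx Num.conj M)^T.

(* the eigenvalues of a square matrix, listed with algebraic multiplicity:
   a sequence rs with char_poly A = \prod_(r <- rs) ('X - r) (it exists since
   C is algebraically closed and char_poly A is monic) *)
Definition eigvals (N : nat) (A : 'M[C]_N) : seq C :=
  xget [::] (fun rs : seq C => char_poly A = \prod_(r <- rs) ('X - r%:P)).

(* singular values of M : 'M_N (as reals), ordered decreasingly: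
   singval M k = s_k(M) for 1 <= k <= N, the square root of the k-th largest
   eigenvalue of M^* M (these eigenvalues are nonnegative reals) *)
Definition singval (N : nat) (M : 'M[C]_N) (k : nat) : R :=
  complex.Re (sqrtC (nth 0 (sort (fun x y => y <= x) (eigvals (ctmx M *m M))) k.-1)).

Definition specnorm (N : nat) (M : 'M[C]_N) : R := singval M 1.

(* Moore-Penrose pseudoinverse: the (unique) X with the four Penrose equations *)
Definition penrose (p q : nat) (A : 'M[C]_(p, q)) (X : 'M[C]_(q, p)) : Prop :=
  [/\ A *m X *m A = A, X *m A *m X = X,
      ctmx (A *m X) = A *m X & ctmx (X *m A) = X *m A].
Definition pinv (p q : nat) (A : 'M[C]_(p, q)) : 'M[C]_(q, p) :=
  xget 0 (penrose A).

Definition mpeval (n m : nat) (A : 'I_m.+1 -> 'M[C]_n) (z : C) : 'M[C]_n :=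
  \sum_(j < m.+1) z ^+ j *: A j.

Definition divdiff (n m : nat) (A : 'I_m.+1 -> 'M[C]_n) (mu1 mu2 : C) : 'M[C]_n :=
  (mu1 - mu2)^-1 *: (mpeval A mu1 - mpeval A mu2).

Definition Fmat (n m : nat) (A : 'I_m.+1 -> 'M[C]_n) (mu1 mu2 : C) (g : R)
  : 'M[C]_(n + n) :=
  block_mx (mpeval A mu1) 0 (g%:C%C *: divdiff A mu1 mu2) (mpeval A mu2).

Definition in_ball (n m : nat) (A Q : 'I_m.+1 -> 'M[C]_n) (eps : R)
  (w : 'I_m.+1 -> R) : Prop :=
  forall j, specnorm (Q j - A j) <= eps * w j.

Definition on_ball_boundary (n m : nat) (A Q : 'I_m.+1 -> 'M[C]_n) (eps : R)
  (w : 'I_m.+1 -> R) : Prop :=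
  in_ball A Q eps w /\ exists j, specnorm (Q j - A j) = eps * w j.

End Defs.

(* Since [v1 v2] has full column rank, its pseudoinverse is a left inverse, so
   Delta0 [v1 v2] = -[sigma1 u1  sigma2 u2]; hence
   Q0(mu_i) v_i = P(mu_i) v_i + Delta0 v_i = sigma_i u_i - sigma_i u_i = 0.
   Only the constant coefficient is perturbed, and by exactly
   ||Delta0|| = (||Delta0|| / w_0) w_0, so Q0 is on the boundary of the ball. *)
From mathcomp Require Import all_boot all_order all_algebra complex.
From mathcomp Require Import reals classical_sets.
Import Order.TTheory GRing.Theory Num.Theory.
Local Open Scope ring_scope.
Set Implicit Arguments. Unset Strict Implicit.

Section ConjugateTranspose.
Variable R : realType.
Local Notation C := (R[i]).

Lemma ctmx_mul p q r (A : 'M[C]_(p, q)) (B : 'M[C]_(q, r)) :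
  ctmx (A *m B) = ctmx B *m ctmx A.
Proof. by rewrite /ctmx (map_mxM Num.conj) trmx_mul. Qed.

Lemma ctmxK p q (A : 'M[C]_(p, q)) : ctmx (ctmx A) = A.
Proof. by apply/matrixP => i j; rewrite /ctmx !mxE conjCK. Qed.

Lemma ctmx0 p q : ctmx (0 : 'M[C]_(p, q)) = 0.
Proof. by apply/matrixP => i j; rewrite /ctmx !mxE rmorph0. Qed.

Lemma ctmx1 p : ctmx (1%:M : 'M[C]_p) = 1%:M.
Proof.
by apply/matrixP => i j; rewrite /ctmx !mxE eq_sym; case: (_ == _);
  rewrite ?rmorph1 ?rmorph0.
Qed.

Lemma ctmx_inv p (A : 'M[C]_p) : ctmx (invmx A) = invmx (ctmx A).
Proof. by rewrite /ctmx (map_invmx Num.conj) trmx_inv. Qed.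

Lemma mulmx_ctmx_rowE p (y : 'rV[C]_p) :
  (y *m ctmx y) 0 0 = \sum_j `|y 0 j| ^+ 2.
Proof. by rewrite mxE; apply: eq_bigr => j _; rewrite /ctmx !mxE normCK. Qed.

Lemma mulmx_ctmx_row_ge0 p (y : 'rV[C]_p) : 0 <= (y *m ctmx y) 0 0.
Proof. by rewrite mulmx_ctmx_rowE; apply: sumr_ge0 => j _; rewrite exprn_ge0. Qed.

Lemma mulmx_ctmx_row_eq0 p (y : 'rV[C]_p) : (y *m ctmx y) 0 0 = 0 -> y = 0.
Proof.
rewrite mulmx_ctmx_rowE => /psumr_eq0P y0; apply/rowP => j; rewrite mxE.
have /eqP := y0 (fun j _ => exprn_ge0 2 (normr_ge0 (y 0 j))) j isT.
by rewrite sqrf_eq0 normr_eq0 => /eqP.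
Qed.

Lemma unit_cV_neq0 p (v : 'cV[C]_p) : ctmx v *m v = 1%:M -> v != 0.
Proof.
move=> vv1; apply/eqP => v0; move: vv1; rewrite v0 mulmx0 => /matrixP /(_ 0 0).
by rewrite !mxE /= => /eqP; rewrite eq_sym oner_eq0.
Qed.

End ConjugateTranspose.

Section SingularValues.
Variable R : realType.
Local Notation C := (R[i]).

Lemma eigenvalue_gram_ge0 p (M : 'M[C]_p) x : eigenvalue (ctmx M *m M) x -> 0 <= x.
Proof.
move=> /eigenvalueP [v vMM v0].
set y := v *m ctmx M.
have yy : y *m ctmx y = x *: (v *m ctmx v).
  by rewrite /y ctmx_mul ctmxK mulmxA -(mulmxA v) vMM scalemxAl.
have vv_gt0 : 0 < (v *m ctmx v) 0 0.
  rewrite lt_def mulmx_ctmx_row_ge0 andbT.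
  by apply/eqP => /mulmx_ctmx_row_eq0 /eqP; rewrite (negbTE v0).
by have := mulmx_ctmx_row_ge0 y; rewrite yy mxE pmulr_lge0.
Qed.

Lemma eigenvalue_eigvals p (G : 'M[C]_p) x : x \in eigvals G -> eigenvalue G x.
Proof.
rewrite /eigvals; case: xgetP => // rs _ charG xrs.
rewrite eigenvalue_root_char; apply/rootP/eqP.
rewrite charG horner_prod prodf_seq_eq0; apply/hasP; exists x => //.
by rewrite hornerXsubC subrr eqxx.
Qed.

(* The default value 0 of [nth] covers out-of-range indices. *)
Lemma singval_sqrt_eigenvalue p (M : 'M[C]_p) k : exists2 x,
  x = 0 \/ eigenvalue (ctmx M *m M) x & singval M k = complex.Re (sqrtC x).
Proof.
rewrite /singval; set s := sort _ _.
case: (ltnP k.-1 (size s)) => sk.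
  exists (nth 0 s k.-1) => //; right; apply: eigenvalue_eigvals.
  by rewrite -(mem_sort (fun x y => y <= x)) mem_nth.
by exists 0; [left | rewrite nth_default].
Qed.

Lemma singval_ge0 p (M : 'M[C]_p) k : 0 <= singval M k.
Proof.
have [x x_eig ->] := singval_sqrt_eigenvalue M k.
have : 0 <= x by case: x_eig => [->|/eigenvalue_gram_ge0].
by rewrite -sqrtC_ge0 lecE => /andP [_].
Qed.

Lemma singval0 p k : singval (0 : 'M[C]_p) k = 0.
Proof.
have [x x_eig ->] := singval_sqrt_eigenvalue (0 : 'M[C]_p) k.
suff -> : x = 0 by rewrite sqrtC0.
case: x_eig => // /eigenvalueP [v v0x v0]; move: v0x; rewrite !mulmx0 => /esym/eqP.
by rewrite scaler_eq0 (negbTE v0) orbF => /eqP.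
Qed.

End SingularValues.

Section Pseudoinverse.
Variable R : realType.
Local Notation C := (R[i]).

Lemma full_col_rank_mulmx_eq0 p q r (V : 'M[C]_(p, q)) (c : 'M[C]_(q, r)) :
  \rank V = q -> V *m c = 0 -> c = 0.
Proof.
move=> rkV Vc0; have freeVt : row_free V^T by rewrite /row_free mxrank_tr rkV.
apply/trmx_inj; rewrite trmx0; apply: (row_free_inj freeVt).
by rewrite /= -trmx_mul Vc0 trmx0 mul0mx.
Qed.

Lemma gram_unitmx p q (V : 'M[C]_(p, q)) : \rank V = q -> ctmx V *m V \in unitmx.
Proof.
move=> rkV; rewrite unitmxE unitfE; apply/det0P => -[z z0 zG0].
set y := z *m ctmx V.
have y0 : y = 0.
  apply: mulmx_ctmx_row_eq0.
  by rewrite /y ctmx_mul ctmxK mulmxA -(mulmxA z) zG0 mul0mx mxE.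
have /(full_col_rank_mulmx_eq0 rkV) ctz0 : V *m ctmx z = 0.
  by rewrite -(ctmxK V) -ctmx_mul -/y y0 ctmx0.
by move: z0; rewrite -(ctmxK z) ctz0 ctmx0 eqxx.
Qed.

(* For full column rank the pseudoinverse is (V^* V)^-1 V^*. *)
Lemma penrose_pinv p q (V : 'M[C]_(p, q)) : \rank V = q -> penrose V (pinv V).
Proof.
move=> rkV; rewrite /pinv; apply: xgetPex.
have := gram_unitmx rkV; set G := ctmx V *m V => Gu.
have ctG : ctmx G = G by rewrite /G ctmx_mul ctmxK.
exists (invmx G *m ctmx V); split.
- by rewrite !mulmxA -(mulmxA _ _ V) -/G -mulmxA mulVmx // mulmx1.
- by rewrite -(mulmxA (invmx G)) -/G mulVmx // mul1mx.
- by rewrite !ctmx_mul ctmxK ctmx_inv ctG mulmxA.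
- by rewrite -mulmxA -/G mulVmx // ctmx1.
Qed.

Lemma mul_pinv_full_col_rank p q (V : 'M[C]_(p, q)) :
  \rank V = q -> pinv V *m V = 1%:M.
Proof.
move=> rkV; have [VXV _ _ _] := penrose_pinv rkV.
apply/eqP; rewrite -subr_eq0; apply/eqP; apply: (full_col_rank_mulmx_eq0 rkV).
by rewrite mulmxBr mulmx1 mulmxA VXV subrr.
Qed.

Lemma interpolating_perturbation n (u1 u2 v1 v2 : 'cV[C]_n) (s1 s2 : C) :
  \rank (row_mx v1 v2) = 2%N ->
  let D := - (row_mx u1 u2 *m block_mx s1%:M 0 0 s2%:M *m pinv (row_mx v1 v2)) in
  D *m v1 = - (s1 *: u1) /\ D *m v2 = - (s2 *: u2).
Proof.
move=> rkV D.
have : D *m row_mx v1 v2 = row_mx (- (s1 *: u1)) (- (s2 *: u2)).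
  rewrite /D mulNmx -(mulmxA _ (pinv _)) mul_pinv_full_col_rank // mulmx1 mul_row_block.
  by rewrite !(mulmx0, addr0, add0r) !mul_mx_scalar -opp_row_mx.
by rewrite mul_mx_row => /eq_row_mx.
Qed.

End Pseudoinverse.

Section MatrixPolynomials.
Variable R : realType.
Local Notation C := (R[i]).

Definition perturb0 n m (A : 'I_m.+1 -> 'M[C]_n) (D : 'M[C]_n) :=
  fun j => if j == ord0 then A j + D else A j.

Lemma mpeval_perturb0 n m (A : 'I_m.+1 -> 'M[C]_n) D z :
  mpeval (perturb0 A D) z = mpeval A z + D.
Proof.
rewrite /mpeval !big_ord_recl /perturb0 eqxx expr0 !scale1r addrAC.
by congr (_ + _ + _); apply: eq_bigr => i _; rewrite eq_sym (negbTE (neq_lift _ _)).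
Qed.

Lemma perturb0_on_ball_boundary n m (A : 'I_m.+1 -> 'M[C]_n) D w :
  (forall j, 0 <= w j) -> 0 < w ord0 ->
  on_ball_boundary A (perturb0 A D) (specnorm D / w ord0) w.
Proof.
move=> w_ge0 w0_gt0.
have dist0 : specnorm (perturb0 A D ord0 - A ord0) = specnorm D / w ord0 * w ord0.
  by rewrite /perturb0 eqxx addrC addKr divfK ?gt_eqF.
split; last by exists ord0.
move=> j; have [->|j0] := eqVneq j ord0; first by rewrite dist0 lexx.
rewrite /perturb0 (negbTE j0) subrr /specnorm singval0.
by apply: mulr_ge0 => //; apply: divr_ge0; [exact: singval_ge0 | exact: ltW].
Qed.

Lemma det_kernel_eq0 n (M : 'M[C]_n) (v : 'cV[C]_n) :
  v != 0 -> M *m v = 0 -> \det M = 0.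
Proof.
move=> v0 Mv0; rewrite -det_tr; apply/eqP/det0P; exists v^T; first by rewrite trmx_eq0.
by rewrite -trmx_mul Mv0 trmx0.
Qed.

End MatrixPolynomials.

Theorem theorem2 (R : realType) (n m : nat) (A : 'I_m.+1 -> 'M[R[i]]_n)
  (mu1 mu2 : R[i]) (w : 'I_m.+1 -> R)
  (u1 u2 v1 v2 : 'cV[R[i]]_n) :
  \det (A ord_max) != 0 ->
  mu1 != mu2 ->
  (forall j, 0 <= w j) -> 0 < w ord0 ->
  (forall g : R, 0 <= g ->
     singval (Fmat A mu1 mu2 g) (n + n).-1 <= singval (Fmat A mu1 mu2 0) (n + n).-1) ->
  ctmx u1 *m u1 = 1%:M -> ctmx v1 *m v1 = 1%:M ->
  ctmx u2 *m u2 = 1%:M -> ctmx v2 *m v2 = 1%:M ->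
  mpeval A mu1 *m v1 = (singval (mpeval A mu1) n)%:C%C *: u1 ->
  ctmx (mpeval A mu1) *m u1 = (singval (mpeval A mu1) n)%:C%C *: v1 ->
  mpeval A mu2 *m v2 = (singval (mpeval A mu2) n)%:C%C *: u2 ->
  ctmx (mpeval A mu2) *m u2 = (singval (mpeval A mu2) n)%:C%C *: v2 ->
  \rank (row_mx v1 v2) = 2%N ->
  let sigma1 : R[i] := (singval (mpeval A mu1) n)%:C%C in
  let sigma2 : R[i] := (singval (mpeval A mu2) n)%:C%C in
  let Delta0 : 'M[R[i]]_n :=
    - (row_mx u1 u2 *m block_mx sigma1%:M 0 0 sigma2%:M *m pinv (row_mx v1 v2)) in
  let Q0 : 'I_m.+1 -> 'M[R[i]]_n :=
    fun j => if j == ord0 then A j + Delta0 else A j in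
  on_ball_boundary A Q0 (specnorm Delta0 / w ord0) w /\
  (\det (mpeval Q0 mu1) = 0 /\ v1 != 0 /\ mpeval Q0 mu1 *m v1 = 0) /\
  (\det (mpeval Q0 mu2) = 0 /\ v2 != 0 /\ mpeval Q0 mu2 *m v2 = 0).
Proof.
move=> _ _ w_ge0 w0_gt0 _ _ v1_unit _ v2_unit Pv1 _ Pv2 _ rkV sigma1 sigma2 Delta0 Q0.
have [Dv1 Dv2] := interpolating_perturbation u1 u2 sigma1 sigma2 rkV.
have Q0v1 : mpeval Q0 mu1 *m v1 = 0.
  by rewrite mpeval_perturb0 mulmxDl Pv1 Dv1 subrr.
have Q0v2 : mpeval Q0 mu2 *m v2 = 0.
  by rewrite mpeval_perturb0 mulmxDl Pv2 Dv2 subrr.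
have v1_neq0 := unit_cV_neq0 v1_unit.
have v2_neq0 := unit_cV_neq0 v2_unit.
split; first exact: perturb0_on_ball_boundary.
by split; split; do ?split; first [exact: det_kernel_eq0 Q0v1 | exact: det_kernel_eq0 Q0v2 | done].
Qed.
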